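(* Let $B \in M_m \otimes M_n$ be symmetric. Then $W^{1+i}_{\max}(B)$ equals the optimal value of the optimization problem \[ \text{maximize } \operatorname{Tr}(BX) \ \text{ subject to } \ \operatorname{Tr}(BX) = \operatorname{Tr}(BX^\Gamma),\ \operatorname{Tr}(X) = 1,\ X \succeq 0, \] over real symmetric matrices $X \in M_m\otimes M_n$, and it also equals the optimal value of \[ \text{minimize } c \ \text{ subject to } \ pB + (1-p)B^\Gamma \preceq cI, \] over $c, p \in \mathbb{R}$.
   Context: $M_n$ denotes real $n\times n$ matrices and $M_m\otimes M_n$ is identified with $M_{mn}$ via the Kronecker product. For $A = \sum_j X_j \otimes Y_j \in M_m\otimes M_n$, the partial transpose is the linear map $A^\Gamma = \sum_j X_j \otimes Y_j^T$. $X\succeq 0$ means $X$ is positive semidefinite, and $S \preceq cI$ means $cI - S$ is positive semidefinite. The numerical range of a complex matrix $A\in M_N(\mathbb{C})$ is $W(A) = \{\mathbf{x}^*A\mathbf{x} : \mathbf{x}\in\mathbb{C}^N, \|\mathbf{x}\|=1\}$. Define $W^{1+i}(B) = \{c\in\mathbb{R} : c(1+i) \in W(B + iB^\Gamma)\}$; this is a nonempty compact interval, and $W^{1+i}_{\max}(B)$ denotes its maximum. *)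

From HB Require Import structures.
From mathcomp Require Import all_boot all_order all_algebra.
From mathcomp Require Import reals.
From mathcomp Require Import complex mxtens.
Set Implicit Arguments. Unset Strict Implicit. Unset Printing Implicit Defensive.
Import Order.TTheory GRing.Theory Num.Theory.
Local Open Scope ring_scope.
Local Open Scope complex_scope.

(* M_m (x) M_n is identified with M_(m*n) via the Kronecker product
   [tensmx] of mxtens: row/column index (i,k) <-> mxtens_index (i,k). *)

(* Partial transpose (transpose on the second tensor factor):
   A^Gamma_{(i,k),(j,l)} = A_{(i,l),(j,k)}, so (X *t Y)^Gamma = X *t Y^T. *)
Definition ptrans (R : Type) (m n : nat) (A : 'M[R]_(m * n)) : 'M[R]_(m * n) :=
  \matrix_(r, s) A (mxtens_index ((mxtens_unindex r).1, (mxtens_unindex s).2))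
                   (mxtens_index ((mxtens_unindex s).1, (mxtens_unindex r).2)).

Definition psd (R : realType) (N : nat) (X : 'M[R]_N) : Prop :=
  forall v : 'cV[R]_N, 0 <= (v^T *m X *m v) 0 0.

Definition numrange (R : realType) (N : nat) (A : 'M[R[i]]_N) : R[i] -> Prop :=
  fun z => exists x : 'cV[R[i]]_N,
    \sum_j (x j 0)^* * x j 0 = 1 /\ z = ((map_mx Num.conj x)^T *m A *m x) 0 0.

Definition cmx (R : realType) (N : nat) (A : 'M[R]_N) : 'M[R[i]]_N :=
  map_mx (fun r : R => r%:C) A.

Definition W1i (R : realType) (m n : nat) (B : 'M[R]_(m * n)) : R -> Prop :=
  fun c => numrange (cmx B + 'i *: cmx (ptrans B)) (c%:C * (1 + 'i)).

Definition is_max (R : realType) (P : R -> Prop) (w : R) : Prop :=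
  P w /\ forall t, P t -> t <= w.
Definition is_sup (R : realType) (P : R -> Prop) (w : R) : Prop :=
  (forall t, P t -> t <= w) /\ (forall u, (forall t, P t -> t <= u) -> w <= u).
Definition is_inf (R : realType) (P : R -> Prop) (w : R) : Prop :=
  (forall t, P t -> w <= t) /\ (forall u, (forall t, P t -> u <= t) -> u <= w).

Definition primal_values (R : realType) (m n : nat) (B : 'M[R]_(m * n)) : R -> Prop :=
  fun t => exists X : 'M[R]_(m * n),
    [/\ X^T = X, psd X, \tr X = 1,
        \tr (B *m X) = \tr (B *m ptrans X) & t = \tr (B *m X)].

Definition dual_values (R : realType) (m n : nat) (B : 'M[R]_(m * n)) : R -> Prop :=
  fun c => exists p : R, psd (c%:M - (p *: B + (1 - p) *: ptrans B)).

From HB Require Import structures.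
From mathcomp Require Import all_boot all_order all_algebra.
From mathcomp Require Import reals.
From mathcomp Require Import complex mxtens.
From mathcomp Require Import ring lra.
From mathcomp Require Import boolp classical_sets set_interval topology normedtype derive.
Set Implicit Arguments. Unset Strict Implicit. Unset Printing Implicit Defensive.
Import Order.TTheory GRing.Theory Num.Theory.
Import numFieldNormedType.Exports.
Local Open Scope ring_scope.

(* Writing x = a + i b with a, b real and C = B^Gamma, one has
   x^* (B + i C) x = (a'Ba + b'Bb) + i (a'Ca + b'Cb), so W^{1+i}(B) is the set of
   values of the Hermitian form of B on unit vectors isotropic for D = B - C.
   As tr D = 0 this set is nonempty, and it is compact, so it has a maximum w.
   A maximizing pair gives the primal point X = aa' + bb' of value w, while
   tr ((cI - pB - (1 - p)C) X) >= 0 bounds every primal value by every dual one.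
   Finally an S-lemma yields mu with B - wI + mu D <= 0, i.e. the dual point
   (w, 1 + mu). It needs no Slater point: the hypothesis is on pairs of
   vectors, and a vector with a'Da > 0 together with one with b'Db < 0 can be
   rescaled into a D-isotropic pair. *)

Section BilinearForms.
Variables (R : comNzRingType) (N : nat).
Implicit Types (M : 'M[R]_N) (u v : 'cV[R]_N).

Definition bform M u v := (u^T *m M *m v) 0 0.
Definition qform M v := bform M v v.

Lemma bformE M u v : bform M u v = \sum_i \sum_j u i 0 * M i j * v j 0.
Proof.
rewrite /bform mxE; under eq_bigr => j _ do rewrite mxE mulr_suml.
rewrite exchange_big /=; apply: eq_bigr => i _; apply: eq_bigr => j _.
by rewrite !mxE.
Qed.

Lemma bformDl M u1 u2 v : bform M (u1 + u2) v = bform M u1 v + bform M u2 v.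
Proof. by rewrite /bform linearD /= !mulmxDl mxE. Qed.

Lemma bformDr M u v1 v2 : bform M u (v1 + v2) = bform M u v1 + bform M u v2.
Proof. by rewrite /bform mulmxDr mxE. Qed.

Lemma bformZl M a u v : bform M (a *: u) v = a * bform M u v.
Proof. by rewrite /bform linearZ /= -!scalemxAl mxE. Qed.

Lemma bformZr M a u v : bform M u (a *: v) = a * bform M u v.
Proof. by rewrite /bform -!scalemxAr mxE. Qed.

Lemma bform_sym M u v : M^T = M -> bform M u v = bform M v u.
Proof.
move=> sM; rewrite /bform; have -> (A : 'M[R]_1) : A 0 0 = A^T 0 0 by rewrite mxE.
by rewrite !trmx_mul trmxK sM mulmxA.
Qed.

Lemma bform_delta M i j : bform M (delta_mx i 0) (delta_mx j 0) = M i j.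
Proof. by rewrite /bform trmx_delta -rowE -colE !mxE. Qed.

Lemma bform_outer (q : 'cV[R]_N) u v :
  bform (q *m q^T) u v = (u^T *m q) 0 0 * (q^T *m v) 0 0.
Proof. by rewrite /bform !mulmxA -(mulmxA _ q^T) [in LHS]mxE big_ord1. Qed.

Lemma qform0 M : qform M 0 = 0.
Proof. by rewrite /qform /bform mulmx0 mxE. Qed.

Lemma qformZ M a v : qform M (a *: v) = a ^+ 2 * qform M v.
Proof. by rewrite /qform bformZl bformZr mulrA expr2. Qed.

Lemma qformD M u v : M^T = M ->
  qform M (u + v) = qform M u + qform M v + 2 * bform M u v.
Proof. by move=> sM; rewrite /qform bformDl !bformDr (bform_sym v u sM); ring. Qed.

Lemma bform_add M1 M2 u v : bform (M1 + M2) u v = bform M1 u v + bform M2 u v.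
Proof. by rewrite /bform mulmxDr mulmxDl mxE. Qed.

Lemma bform_scale a M u v : bform (a *: M) u v = a * bform M u v.
Proof. by rewrite /bform -scalemxAr -scalemxAl mxE. Qed.

Lemma qform_add M1 M2 v : qform (M1 + M2) v = qform M1 v + qform M2 v.
Proof. exact: bform_add. Qed.

Lemma qform_scale a M v : qform (a *: M) v = a * qform M v.
Proof. exact: bform_scale. Qed.

Lemma qform_sub M1 M2 v : qform (M1 - M2) v = qform M1 v - qform M2 v.
Proof. by rewrite qform_add -scaleN1r qform_scale mulN1r. Qed.

Lemma qform_scalar a v : qform a%:M v = a * qform 1%:M v.
Proof. by rewrite -qform_scale scalemx1. Qed.

Lemma mxtrace_mul_outer M (q : 'cV[R]_N) : \tr (M *m (q *m q^T)) = qform M q.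
Proof. by rewrite mulmxA mxtrace_mulC mulmxA /mxtrace big_ord1. Qed.

End BilinearForms.

Lemma bform_map (R S : comNzRingType) (f : {rmorphism R -> S}) N
    (M : 'M[R]_N) (u v : 'cV[R]_N) :
  bform (map_mx f M) (map_mx f u) (map_mx f v) = f (bform M u v).
Proof. by rewrite /bform matrix.map_trmx -!map_mxM mxE. Qed.

Section Semidefinite.
Variables (R : realType) (N : nat).
Implicit Types (M Q X : 'M[R]_N) (u v : 'cV[R]_N).

Lemma psdP M : psd M <-> forall v, 0 <= qform M v.
Proof. by []. Qed.

Lemma qform1E v : qform 1%:M v = \sum_j v j 0 ^+ 2.
Proof. by rewrite /qform /bform mulmx1 mxE; apply: eq_bigr => j _; rewrite mxE expr2. Qed.

Lemma qform1_ge0 v : 0 <= qform 1%:M v.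
Proof. by rewrite qform1E sumr_ge0 // => j _; rewrite sqr_ge0. Qed.

Lemma qform1_eq0 v : qform 1%:M v = 0 -> v = 0.
Proof.
rewrite qform1E => /psumr_eq0P v0; apply/colP => j; rewrite mxE.
by apply/eqP; rewrite -sqrf_eq0 v0 // => k _; rewrite sqr_ge0.
Qed.

Lemma psd_diag_ge0 M i : psd M -> 0 <= M i i.
Proof. by move/psdP/(_ (delta_mx i 0)); rewrite /qform bform_delta. Qed.

Lemma psd_diag_eq0 M i j : M^T = M -> psd M -> M i i = 0 -> M i j = 0.
Proof.
move=> sM /psdP pM Mii; have [<-//|_] := eqVneq i j.
have Mji : M j i = M i j by rewrite -{1}sM mxE.
have line t : 0 <= M j j + 2 * t * M i j.
  have := pM (delta_mx j 0 + t *: delta_mx i 0).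
  rewrite qformD // qformZ bformZr /qform !bform_delta Mii Mji; lra.
apply/eqP/negPn/negP => Mij_neq0.
have := line (- (M j j + 1) / (2 * M i j)).
have -> : 2 * (- (M j j + 1) / (2 * M i j)) * M i j = - (M j j + 1) by field.
lra.
Qed.

Lemma psd_eq0 M : M^T = M -> psd M -> (forall i, M i i = 0) -> M = 0.
Proof. by move=> sM pM M0; apply/matrixP => i j; rewrite mxE psd_diag_eq0. Qed.

Lemma psd_trace_eq0 M : M^T = M -> psd M -> \tr M = 0 -> M = 0.
Proof.
move=> sM pM trM0; apply: psd_eq0 => // i.
by apply: (psumr_eq0P _ trM0) => // j _; apply: psd_diag_ge0.
Qed.

(* One step of symmetric Gaussian elimination on the pivot [M i i]. *)
Definition deflate M i := M - (M i i)^-1 *: (col i M *m (col i M)^T).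

Lemma psd_deflate M i : M^T = M -> psd M -> 0 < M i i ->
  [/\ (deflate M i)^T = deflate M i, psd (deflate M i), deflate M i i i = 0
    & forall j, M j j = 0 -> deflate M i j j = 0].
Proof.
move=> sM pM d_gt0; rewrite /deflate; set d := M i i in d_gt0 *; set c := col i M.
have cE : c = M *m delta_mx i 0 by rewrite /c colE.
have ME j k : (M - d^-1 *: (c *m c^T)) j k = M j k - d^-1 * (M j i * M k i).
  by rewrite !mxE big_ord1 !mxE.
split.
- by rewrite linearB /= linearZ /= trmx_mul trmxK sM.
- apply/psdP => v; set s := bform M (delta_mx i 0) v.
  have -> : qform (M - d^-1 *: (c *m c^T)) v = qform M v - d^-1 * s ^+ 2.
    rewrite qform_sub qform_scale /qform bform_outer expr2.
    rewrite cE !mulmxA trmx_mul sM -/(bform M v _) -/(bform M _ v).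
    by rewrite (bform_sym _ _ sM).
  have := (psdP M).1 pM (v + (- (s / d)) *: delta_mx i 0).
  rewrite qformD // qformZ bformZr {2}/qform bform_delta (bform_sym v _ sM) -/s.
  by have -> : qform M v + (- (s / d)) ^+ 2 * d + 2 * (- (s / d) * s)
            = qform M v - d^-1 * s ^+ 2 by field; rewrite gt_eqF.
- by rewrite ME -/d (_ : d - d^-1 * (d * d) = 0) //; field; rewrite gt_eqF.
- by move=> j Mjj0; rewrite ME Mjj0 (psd_diag_eq0 i sM pM Mjj0) mul0r mulr0 subrr.
Qed.

Lemma psd_gram M : M^T = M -> psd M ->
  exists s : seq 'cV[R]_N, M = \sum_(q <- s) q *m q^T.
Proof.
have [k] := ubnP #|[set i | M i i != 0]|.
elim: k M => // k IH M; rewrite ltnS => supp sM pM.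
have [i /= Mii_neq0 | diag0] := pickP [pred i | M i i != 0]; last first.
  exists [::]; rewrite big_nil; apply: psd_eq0 => // i.
  exact/eqP/negbFE/diag0.
have d_gt0 : 0 < M i i by rewrite lt_def Mii_neq0 psd_diag_ge0.
have [sM' pM' M'ii M'jj] := psd_deflate sM pM d_gt0.
have [|s M'E] := IH (deflate M i) _ sM' pM'.
  apply: leq_trans supp; rewrite [X in (_ < X)%N](cardsD1 i) inE Mii_neq0 add1n ltnS.
  apply/subset_leq_card/fintype.subsetP => j; rewrite !inE => nz.
  have [eq_ji|_] /= := eqVneq j i; first by rewrite eq_ji M'ii eqxx in nz.
  by apply: contraNneq nz => /M'jj ->.
set q := (Num.sqrt (M i i))^-1 *: col i M.
have qqE : q *m q^T = (M i i)^-1 *: (col i M *m (col i M)^T).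
  by rewrite /q linearZ /= -scalemxAl -scalemxAr scalerA -expr2 exprVn sqr_sqrtr // ltW.
by exists (q :: s); rewrite big_cons -M'E qqE /deflate addrC subrK.
Qed.

Lemma mxtrace_mul_psd_ge0 Q X : Q^T = Q -> psd Q -> psd X -> 0 <= \tr (Q *m X).
Proof.
move=> sQ pQ pX; have [s ->] := psd_gram sQ pQ.
rewrite mulmx_suml raddf_sum /= sumr_ge0 // => q _.
by rewrite mxtrace_mulC mxtrace_mul_outer; apply: pX.
Qed.

End Semidefinite.

Section HermitianForms.
Variables (R : realType) (N : nat).
Implicit Types (M A D : 'M[R]_N) (u v a b : 'cV[R]_N).

(* [hform M a b] is the Hermitian form of [M] at the complex vector [a + i b]. *)
Definition hform M a b := qform M a + qform M b.

Lemma hformZ M t a b : hform M (t *: a) (t *: b) = t ^+ 2 * hform M a b.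
Proof. by rewrite /hform !qformZ mulrDr. Qed.

Lemma hform_sub M1 M2 a b : hform (M1 - M2) a b = hform M1 a b - hform M2 a b.
Proof. by rewrite /hform !qform_sub addrACA opprD. Qed.

Lemma hform_scalar t a b : hform t%:M a b = t * hform 1%:M a b.
Proof. by rewrite /hform (qform_scalar t a) (qform_scalar t b) mulrDr. Qed.

Lemma hform_homogeneous_bound A D w :
  (forall a b, hform 1%:M a b = 1 -> hform D a b = 0 -> hform A a b <= w) ->
  forall a b, hform D a b = 0 -> hform (A - w%:M) a b <= 0.
Proof.
move=> A_le_w a b Dab0; rewrite hform_sub hform_scalar.
have s_ge0 : 0 <= hform 1%:M a b by rewrite addr_ge0 ?qform1_ge0.
have [s0|s_neq0] := eqVneq (hform 1%:M a b) 0.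
  have /andP[/eqP/qform1_eq0 -> /eqP/qform1_eq0 ->] :
      (qform 1%:M a == 0) && (qform 1%:M b == 0).
    by rewrite -paddr_eq0 ?qform1_ge0 //; apply/eqP.
  by rewrite /hform !qform0 !addr0 mulr0 subrr.
have s_gt0 : 0 < hform 1%:M a b by rewrite lt_def s_neq0.
set t := (Num.sqrt (hform 1%:M a b))^-1.
have t2 : t ^+ 2 = (hform 1%:M a b)^-1 by rewrite exprVn sqr_sqrtr.
have := A_le_w (t *: a) (t *: b); rewrite !hformZ t2 Dab0 mulr0 mulVf //.
by move=> /(_ erefl erefl); rewrite mulrC ler_pdivrMr // subr_le0.
Qed.

Lemma hform_isotropic_unit D : (0 < N)%N -> \tr D = 0 ->
  exists a b, hform 1%:M a b = 1 /\ hform D a b = 0.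
Proof.
move=> N_gt0 trD0.
have qform_delta M s k : qform M (s *: delta_mx k 0) = s ^+ 2 * M k k.
  by rewrite qformZ /qform bform_delta.
have id_kk k : (1%:M : 'M[R]_N) k k = 1 by rewrite mxE eqxx.
have [[k1 pos]|no_pos] := pselect (exists k, 0 < D k k); last first.
  have Dkk0 k : D k k = 0.
    apply/eqP; rewrite -oppr_eq0; apply/eqP.
    apply: (@psumr_eq0P _ _ predT (fun l => - D l l)) => // [l _|].
      by rewrite oppr_ge0 leNgt; apply/negP => pos; apply: no_pos; exists l.
    by rewrite sumrN -/(\tr D) trD0 oppr0.
  exists (1 *: delta_mx (Ordinal N_gt0) 0), 0.
  by rewrite /hform !qform0 !qform_delta id_kk Dkk0 expr1n mulr1 mulr0 !addr0.
have [[k2 neg]|no_neg] := pselect (exists k, D k k < 0); last first.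
  suff : D k1 k1 = 0 by move=> Dk1; rewrite Dk1 ltxx in pos.
  apply: (psumr_eq0P _ trD0) => // l _.
  by rewrite leNgt; apply/negP => neg; apply: no_neg; exists l.
set d1 := D k1 k1 in pos; set d2 := D k2 k2 in neg.
have d12_gt0 : 0 < d1 - d2 by lra.
exists (Num.sqrt (- d2 / (d1 - d2)) *: delta_mx k1 0).
exists (Num.sqrt (d1 / (d1 - d2)) *: delta_mx k2 0).
rewrite /hform !qform_delta !id_kk -/d1 -/d2 !sqr_sqrtr ?divr_ge0 ?ltW ?oppr_gt0 //.
by split; field; rewrite gt_eqF.
Qed.

(* Rescaling [u2] turns [(u1, u2)] into a [D]-isotropic pair, so the hypothesis
   compares [qform A] on the two sides of the cone [qform D = 0]. *)
Lemma hform_ratio_le A D u1 u2 :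
  (forall a b, hform D a b = 0 -> hform A a b <= 0) ->
  0 < qform D u1 -> qform D u2 < 0 ->
  qform A u1 / qform D u1 <= qform A u2 / qform D u2.
Proof.
move=> AD d1_gt0 d2_lt0; set a1 := qform A u1; set a2 := qform A u2.
set d1 := qform D u1 in d1_gt0 *; set d2 := qform D u2 in d2_lt0 *.
have r_ge0 : 0 <= d1 / - d2 by rewrite divr_ge0 ?ltW ?oppr_gt0.
have := AD u1 (Num.sqrt (d1 / - d2) *: u2).
rewrite /hform !qformZ sqr_sqrtr // -/d1 -/d2 -/a1 -/a2.
have -> : d1 + d1 / - d2 * d2 = 0 by field; rewrite lt_eqF.
move=> /(_ erefl); rewrite ler_pdivrMr //.
have -> : d1 / - d2 * a2 = - (a2 / d2 * d1) by field; rewrite lt_eqF.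
lra.
Qed.

Lemma qform_sign_change D : D^T = D -> \tr D = 0 -> D != 0 ->
  exists u1 u2, 0 < qform D u1 /\ qform D u2 < 0.
Proof.
move=> sD trD0 D_neq0.
have [[u2 neg]|no_neg] := pselect (exists u, qform D u < 0); last first.
  case/eqP: D_neq0; apply: psd_trace_eq0 => // u.
  by rewrite leNgt; apply/negP => neg; apply: no_neg; exists u.
have [[u1 pos]|no_pos] := pselect (exists u, 0 < qform D u); first by exists u1, u2.
case/eqP: D_neq0; apply/eqP; rewrite -oppr_eq0; apply/eqP.
apply: psd_trace_eq0; first by rewrite linearN /= sD.
  apply/psdP => u; rewrite -scaleN1r qform_scale mulN1r oppr_ge0 leNgt.
  by apply/negP => pos; apply: no_pos; exists u.
by rewrite linearN /= trD0 oppr0.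
Qed.

Lemma hform_slemma A D : D^T = D -> \tr D = 0 ->
  (forall a b, hform D a b = 0 -> hform A a b <= 0) ->
  exists mu, forall v, qform A v + mu * qform D v <= 0.
Proof.
move=> sD trD0 AD.
have A_le0 v : qform D v = 0 -> qform A v <= 0.
  by move=> Dv0; have := AD v 0; rewrite /hform !qform0 !addr0; apply.
have [D0|D_neq0] := eqVneq D 0.
  by exists 0 => v; rewrite mul0r addr0 A_le0 // D0 /qform /bform mulmx0 mul0mx mxE.
have [u1 [u2 [pos neg]]] := qform_sign_change sD trD0 D_neq0.
pose S : set R := fun r => exists2 v, 0 < qform D v & r = qform A v / qform D v.
have S_sup : has_sup S.
  split; first by exists (qform A u1 / qform D u1), u1.
  by exists (qform A u2 / qform D u2) => _ [v Dv ->]; apply: hform_ratio_le.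
exists (- sup S) => v; have [Dv_lt0|Dv_gt0|Dv0] := ltgtP (qform D v) 0.
- have : sup S <= qform A v / qform D v.
    by apply: ge_sup; [case: S_sup | move=> _ [u Du ->]; apply: hform_ratio_le].
  move/(ler_wnM2r (ltW Dv_lt0)); rewrite divfK ?lt_eqF // mulNr; lra.
- have : qform A v / qform D v <= sup S by apply: sup_upper_bound => //; exists v.
  by rewrite ler_pdivrMr // mulNr; lra.
- by rewrite Dv0 mulr0 addr0 A_le0.
Qed.

End HermitianForms.

Section Compactness.
Local Open Scope classical_set_scope.
Variable R : realType.

Lemma qform_continuous k (M : 'M[R]_k) :
  continuous (fun y : 'rV[R]_k => qform M y^T).
Proof.
have -> : (fun y : 'rV[R]_k => qform M y^T) =
          (fun y => \sum_i \sum_j y 0 i * M i j * y 0 j).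
  apply/funext => y; rewrite /qform bformE.
  by apply: eq_bigr => i _; apply: eq_bigr => j _; rewrite !mxE.
apply: continuous_big => [|i _]; first exact: add_continuous.
apply: continuous_big => [|j _]; first exact: add_continuous.
move=> y; apply: (@continuousM _ _ (fun y : 'rV[R]_k => y 0 i * M i j) (fun y => y 0 j)).
  apply: (@continuousM _ _ (fun y : 'rV[R]_k => y 0 i) (fun=> M i j)).
    exact: coord_continuous.
  exact: cst_continuous.
exact: coord_continuous.
Qed.

Variable N : nat.
Implicit Types (A D M : 'M[R]_N) (a b : 'cV[R]_N).

Lemma hform_block M a b : hform M a b = qform (block_mx M 0 0 M) (col_mx a b).
Proof.
rewrite /hform /qform /bform tr_col_mx mul_row_block !mulmx0 addr0 add0r.
by rewrite mul_row_col [RHS]mxE.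
Qed.

Lemma hform_max_isotropic A D : (0 < N)%N -> \tr D = 0 ->
  exists a b, [/\ hform 1%:M a b = 1, hform D a b = 0 &
    forall a' b', hform 1%:M a' b' = 1 -> hform D a' b' = 0 ->
      hform A a' b' <= hform A a b].
Proof.
move=> N_gt0 trD0.
pose K := (fun y : 'rV[R]_(N + N) => qform 1%:M y^T) @^-1` [set 1] `&`
          (fun y => qform (block_mx D 0 0 D) y^T) @^-1` [set 0].
have K_pair a b : K (col_mx a b)^T <-> hform 1%:M a b = 1 /\ hform D a b = 0.
  by rewrite /K /= trmxK !hform_block -scalar_mx_block.
have K_closed : closed K.
  by apply: closedI; (apply: preimage_closed; last exact: closed_eq) => y _;
    apply: qform_continuous.
have cube_compact :=
  @rV_compact R (N + N) (fun=> `[-1, 1]) (fun=> @segment_compact R _ _).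
have K_bounded : K `<=` [set y : 'rV_(N + N) | forall i, `[-1, 1] (y ord0 i)].
  move=> y [/= y_unit _] i; have : y 0 i ^+ 2 <= 1.
    rewrite -y_unit qform1E (bigD1 i) //= mxE lerDl.
    by apply: sumr_ge0 => k _; exact: sqr_ge0.
  by rewrite in_itv /= => ?; apply/andP; split; nra.
have K_compact : compact K.
  exact: subclosed_compact K_closed cube_compact K_bounded.
have K_neq0 : K !=set0.
  have [a [b ab]] := hform_isotropic_unit N_gt0 trD0.
  by exists (col_mx a b)^T; apply/K_pair.
have [y Ky y_max] := compact_EVT_max K_neq0 K_compact
  (continuous_subspaceT (@qform_continuous _ (block_mx A 0 0 A))).
have yE : col_mx (usubmx y^T) (dsubmx y^T) = y^T by rewrite vsubmxK.
have /K_pair[ab_unit ab_iso] : K (col_mx (usubmx y^T) (dsubmx y^T))^T.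
  by rewrite yE trmxK; move: Ky; rewrite in_setE.
exists (usubmx y^T), (dsubmx y^T); split => // a' b' a'b'_unit a'b'_iso.
rewrite !hform_block yE -[col_mx a' b'](trmxK (col_mx a' b')).
by apply: y_max; rewrite in_setE; apply/K_pair.
Qed.

End Compactness.

Section PartialTranspose.
Variables (R : pzRingType) (m n : nat).
Local Notation N := (m * n)%N.
Implicit Types A X : 'M[R]_N.

Lemma ptrans_trmx A : (ptrans A)^T = ptrans A^T.
Proof. by apply/matrixP => r s; rewrite !mxE. Qed.

Lemma mxtens_unindex_pairK (r : 'I_N) :
  mxtens_index ((mxtens_unindex r).1, (mxtens_unindex r).2) = r.
Proof. by rewrite -surjective_pairing mxtens_unindexK. Qed.

Lemma mxtrace_ptrans A : \tr (ptrans A) = \tr A.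
Proof. by apply: eq_bigr => r _; rewrite mxE mxtens_unindex_pairK. Qed.

Lemma mxtrace_mul_ptrans A X : \tr (A *m ptrans X) = \tr (ptrans A *m X).
Proof.
rewrite /mxtrace; under eq_bigr do rewrite mxE; under [RHS]eq_bigr do rewrite mxE.
rewrite !pair_big /=.
pose swap (p : 'I_N * 'I_N) :=
  (mxtens_index ((mxtens_unindex p.1).1, (mxtens_unindex p.2).2),
   mxtens_index ((mxtens_unindex p.2).1, (mxtens_unindex p.1).2)).
have swapK : involutive swap.
  move=> [r s]; rewrite /swap; cbn -[mxtens_unindex mxtens_index].
  rewrite !mxtens_indexK; cbn -[mxtens_unindex mxtens_index].
  by rewrite !mxtens_unindex_pairK.
rewrite [RHS](reindex_inj (inv_inj swapK)); apply: eq_bigr => -[r s] _.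
rewrite /swap !mxE; cbn -[mxtens_unindex mxtens_index].
rewrite !mxtens_indexK; cbn -[mxtens_unindex mxtens_index].
by rewrite !mxtens_unindex_pairK.
Qed.

End PartialTranspose.

Section Complexification.
Local Open Scope complex_scope.
Variables (R : realType) (N : nat).
Implicit Types (B C M : 'M[R]_N) (a b : 'cV[R]_N).
Local Notation toC := (real_complex R).

Definition cvec a b : 'cV[R[i]]_N := map_mx toC a + 'i *: map_mx toC b.

Lemma cvecE (x : 'cV[R[i]]_N) :
  x = cvec (map_mx (@complex.Re R) x) (map_mx (@complex.Im R) x).
Proof. by apply/matrixP => i j; rewrite !mxE -complexE. Qed.

Lemma cvec_conj a b :
  map_mx Num.conj (cvec a b) = map_mx toC a + (- 'i) *: map_mx toC b.
Proof.
have conj_real (r : R) : Num.conj r%:C = r%:C := conjc_real r.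
by apply/matrixP => i j; rewrite !mxE rmorphD rmorphM /= !conj_real conjCi.
Qed.

Lemma bform_cvec M a b : M^T = M ->
  bform (cmx M) (map_mx Num.conj (cvec a b)) (cvec a b) = (hform M a b)%:C.
Proof.
move=> sM; have ii : 'i * 'i = -1 :> R[i] by rewrite -expr2 sqr_i.
rewrite cvec_conj /cvec bformDl !bformDr !bformZl !bformZr !bform_map.
rewrite (bform_sym b a sM) /hform /qform rmorphD /= !mulNr mulrA ii.
ring.
Qed.

Lemma numrangeP B C (u v : R) : B^T = B -> C^T = C ->
  numrange (cmx B + 'i *: cmx C) (u +i* v) <->
  exists a b, [/\ hform 1%:M a b = 1, hform B a b = u & hform C a b = v].
Proof.
move=> sB sC.
have cmx1 : cmx (1%:M : 'M[R]_N) = 1%:M by rewrite /cmx map_scalar_mx rmorph1.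
have normE a b : \sum_j (cvec a b j 0)^* * cvec a b j 0 = (hform 1%:M a b)%:C.
  rewrite -(bform_cvec a b (trmx1 _ _)) cmx1 /bform mulmx1 mxE.
  by apply: eq_bigr => j _; rewrite !mxE.
have valueE a b :
    ((map_mx Num.conj (cvec a b))^T *m (cmx B + 'i *: cmx C) *m cvec a b) 0 0 =
    (hform B a b +i* hform C a b).
  by rewrite -/(bform _ _ _) bform_add bform_scale !bform_cvec // [RHS]complexE.
split=> [[x []]|[a [b [ab_unit <- <-]]]].
  rewrite [x]cvecE normE valueE => -[ab_unit] [-> ->].
  by exists (map_mx (@complex.Re R) x), (map_mx (@complex.Im R) x).
by exists (cvec a b); rewrite normE valueE ab_unit.
Qed.

End Complexification.

Section Duality.
Variables (R : realType) (m n : nat).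
Local Notation N := (m * n)%N.
Implicit Types (B X : 'M[R]_N) (a b : 'cV[R]_N).

Lemma W1iP B c : B^T = B ->
  W1i B c <-> exists a b,
    [/\ hform 1%:M a b = 1, hform B a b = c & hform (ptrans B) a b = c].
Proof.
move=> sB; have sC : (ptrans B)^T = ptrans B by rewrite ptrans_trmx sB.
rewrite /W1i (_ : c%:C * (1 + 'i) = (c +i* c))%C; first exact: numrangeP.
by rewrite mulrDr mulr1 mulrC [RHS]complexE.
Qed.

Lemma primal_values_hform B a b :
  hform 1%:M a b = 1 -> hform B a b = hform (ptrans B) a b ->
  primal_values B (hform B a b).
Proof.
move=> ab_unit ab_iso; exists (a *m a^T + b *m b^T).
have trE M : \tr (M *m (a *m a^T + b *m b^T)) = hform M a b.
  by rewrite mulmxDr mxtraceD !mxtrace_mul_outer.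
split=> //.
- by rewrite linearD /= !trmx_mul !trmxK.
- apply/psdP => v; rewrite qform_add /qform !bform_outer.
  have sym_dot (u : 'cV[R]_N) : (u^T *m v) 0 0 = (v^T *m u) 0 0.
    by rewrite -[in LHS](trmxK v) -trmx_mul mxE.
  by rewrite !sym_dot addr_ge0 // -expr2 sqr_ge0.
- by rewrite -[a *m a^T + _]mul1mx trE.
- by rewrite mxtrace_mul_ptrans !trE.
Qed.

Lemma W1i_primal B t : B^T = B -> W1i B t -> primal_values B t.
Proof.
move=> sB /(W1iP _ sB)[a [b [ab_unit <- ab_iso]]].
by apply: primal_values_hform; rewrite ?ab_iso.
Qed.

Lemma weak_duality B t c : B^T = B -> primal_values B t -> dual_values B c -> t <= c.
Proof.
move=> sB [X [sX pX trX1 X_iso ->]] [p pQ].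
set Q := c%:M - (p *: B + (1 - p) *: ptrans B) in pQ *.
have sQ : Q^T = Q by rewrite linearB linearD /= !linearZ /= ptrans_trmx sB tr_scalar_mx.
have := mxtrace_mul_psd_ge0 sQ pQ pX.
rewrite /Q mulmxBl mulmxDl mul_scalar_mx -!scalemxAl linearB linearD /= !linearZ /=.
by rewrite trX1 -mxtrace_mul_ptrans -X_iso; lra.
Qed.

Lemma strong_duality B : (0 < N)%N -> B^T = B ->
  exists2 w, W1i B w & dual_values B w.
Proof.
move=> N_gt0 sB; set C := ptrans B; set D := B - C.
have sC : C^T = C by rewrite ptrans_trmx sB.
have sD : D^T = D by rewrite linearB /= sB sC.
have trD0 : \tr D = 0 by rewrite linearB /= mxtrace_ptrans subrr.
have [a [b [ab_unit ab_iso ab_max]]] := hform_max_isotropic B N_gt0 trD0.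
have ab_C : hform C a b = hform B a b by move: ab_iso; rewrite hform_sub; lra.
exists (hform B a b); first by apply/W1iP => //; exists a, b.
have [mu mu_sep] := hform_slemma sD trD0 (hform_homogeneous_bound ab_max).
exists (mu + 1); apply/psdP => v; have := mu_sep v.
rewrite !qform_sub qform_add !qform_scale !(qform_scalar (hform B a b)).
nra.
Qed.

End Duality.

Theorem mainTheorem4 (R : realType) (m n : nat) (B : 'M[R]_(m * n)) :
  (0 < m)%N -> (0 < n)%N -> B^T = B ->
  exists w : R,
    [/\ is_max (W1i B) w, is_sup (primal_values B) w & is_inf (dual_values B) w].
Proof.
move=> m_gt0 n_gt0 sB.
have N_gt0 : (0 < m * n)%N by rewrite muln_gt0 m_gt0 n_gt0.
have [w Ww dual_w] := strong_duality N_gt0 sB.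
have primal_w := W1i_primal sB Ww.
exists w; split.
- by split=> // t /(W1i_primal sB) /weak_duality; apply.
- split=> [t primal_t | u ub]; first exact: weak_duality sB primal_t dual_w.
  exact: ub.
- split=> [c dual_c | u lb]; first exact: weak_duality sB primal_w dual_c.
  exact: lb.
Qed.
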